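(* Let $L$ be an $n\times n$ complex matrix with at most one nonzero entry in each row and in each column (a generalized permutation matrix in the relaxed sense, allowing zero rows and columns). Let $n_z = n - \mathrm{rank}(L)$ be the number of zero columns (equivalently, zero rows) of $L$. Consider decompositions $L = AD$ with $A$ an $n\times n$ permutation matrix and $D$ an $n\times n$ diagonal matrix. Then $D$ is always uniquely determined by $L$, and the decomposition $L=AD$ is unique if and only if $n_z \le 1$; otherwise there are $n_z!$ ways to choose $A$. However, if one imposes the rule that, for every cycle of the permutation $\sigma$ associated with $A$ (with domain $N_\gamma$), the set $\{j \in N_\gamma : D_j = 0\}$ has at most one element, then the choice of $A$ is unique; and it is always possible to choose $A$ so that this rule holds.
   Context: For a permutation matrix $A$, the associated permutation $\sigma\in S_n$ is defined by $A e_j = e_{\sigma(j)}$, so that $(AD)e_j = D_j e_{\sigma(j)}$ where $D_j$ is the $j$-th diagonal entry of $D$. The permutation $\sigma$ decomposes into disjoint cycles; $N_\gamma\subseteq\{1,\dots,n\}$ denotes the domain of the $\gamma$-th cycle, and these domains partition $\{1,\dots,n\}$. *)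

From HB Require Import structures.
From mathcomp Require Import all_boot all_order all_algebra all_fingroup.
From mathcomp Require Import complex.
From mathcomp Require Import boolp reals.
Set Implicit Arguments. Unset Strict Implicit. Unset Printing Implicit Defensive.
Import Order.TTheory GRing.Theory Num.Theory.
Local Open Scope ring_scope.

(* The permutation matrix A associated with sigma, following the convention
   A e_j = e_(sigma j), i.e. A i j = 1 iff i = sigma j. *)
Definition perm_matrix (F : nzRingType) (n : nat) (s : 'S_n) : 'M[F]_n :=
  \matrix_(i, j) (i == s j)%:R.

Definition at_most_one_nz_per_row_col (F : nzRingType) (n : nat) (L : 'M[F]_n) : Prop :=
  (forall i j1 j2, L i j1 != 0 -> L i j2 != 0 -> j1 = j2) /\
  (forall j i1 i2, L i1 j != 0 -> L i2 j != 0 -> i1 = i2).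

Definition is_decomp (F : nzRingType) (n : nat) (L : 'M[F]_n) (s : 'S_n) (d : 'rV[F]_n) : Prop :=
  L = perm_matrix F s *m diag_mx d.

Definition cycle_rule (F : nzRingType) (n : nat) (s : 'S_n) (d : 'rV[F]_n) : Prop :=
  forall x : 'I_n, (#|[set j in porbit s x | d 0%R j == 0%R]| <= 1)%N.

Definition zero_cols (F : nzRingType) (n : nat) (L : 'M[F]_n) : {set 'I_n} :=
  [set j | [forall i, L i j == 0]].
Definition zero_rows (F : nzRingType) (n : nat) (L : 'M[F]_n) : {set 'I_n} :=
  [set i | [forall j, L i j == 0]].

From HB Require Import structures.
From mathcomp Require Import all_boot all_order all_algebra all_fingroup.
From mathcomp Require Import complex.
From mathcomp Require Import boolp reals.
From mathcomp Require Import zify.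
Set Implicit Arguments. Unset Strict Implicit. Unset Printing Implicit Defensive.
Import Order.TTheory GRing.Theory Num.Theory.

(* If L = A D then L i j = [i = sigma j] D_j, so D_j is the j-th column sum of
   L and sigma is forced on the columns with nonzero sum: the admissible sigma
   form a coset of the permutations of the set Z of zero columns, which gives
   |Z|! choices and rank L = n - |Z|.  An admissible sigma exists because a
   column j whose nonzero entry sits in row i != sigma j can be repaired by
   composing with a transposition without creating new mismatches.  Composing
   with the transposition of two zero columns lying on one cycle splits that
   cycle, so the number of cycles grows until the cycle rule holds.  Under the
   rule, all points of the cycle through a zero column j other than j are
   nonzero columns, where any two admissible permutations agree; tracking that
   cycle shows they also agree at j. *)

Section PuncturedOrbits.
Variables (T : finType) (s t : {perm T}) (x : T).
Local Open Scope group_scope.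

Lemma mem_porbit_agree :
  {in porbit s x, forall y, y != x -> s y = t y} -> s x \in porbit t x.
Proof.
move=> agree; rewrite porbit_sym; apply/contraT => xNt.
have orbit_sx i : (s ^+ i) (s x) \in porbit t (s x).
  elim: i => [|i IHi]; first by rewrite expg0 perm1 porbit_id.
  have yNx : (s ^+ i) (s x) != x by apply: contraNneq xNt => yx; rewrite -{1}yx.
  rewrite expgSr permM agree //; last by rewrite -permM -expgS mem_porbit.
  by case/porbitP: IHi => k ->; rewrite -permM -expgSr mem_porbit.
have /porbitP[i xE] : x \in porbit s (s x) by rewrite porbit_sym (mem_porbit s 1).
by move: xNt; rewrite {1}xE orbit_sx.
Qed.

Lemma eq_perm_punctured_porbits :
  {in porbit s x, forall y, y != x -> s y = t y} ->
  {in porbit t x, forall y, y != x -> s y = t y} -> s x = t x.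
Proof.
move=> agree_s agree_t; pose z := t^-1 (s x).
have tz : t z = s x by rewrite permKV.
have z_t : z \in porbit t x.
  by rewrite porbit_sym -(porbit_perm t 1) expg1 tz porbit_sym mem_porbit_agree.
have [zx | zNx] := eqVneq z x; first by rewrite -tz zx.
by move: (agree_t z z_t zNx); rewrite tz => /perm_inj zx; rewrite zx eqxx in zNx.
Qed.

End PuncturedOrbits.

Local Open Scope ring_scope.

Section PermutedDiagonal.
Variables (F : nzRingType) (n : nat) (L : 'M[F]_n).

Definition colsum : 'rV[F]_n := \row_j \sum_i L i j.

Definition zero_sum_cols : {set 'I_n} := [set j | colsum 0 j == 0].

Definition fits (s : 'S_n) : bool :=
  [forall i, forall j, (L i j != 0) ==> (s j == i)].

Lemma fitsP (s : 'S_n) : reflect (forall i j, L i j != 0 -> s j = i) (fits s).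
Proof.
apply: (iffP forallP) => [fit i j nzL | fit i].
  by have /forallP/(_ j)/implyP/(_ nzL)/eqP := fit i.
by apply/forallP => j; apply/implyP => /fit ->.
Qed.

Lemma fits_entry (s : 'S_n) i j : fits s -> L i j = (i == s j)%:R * colsum 0 j.
Proof.
move/fitsP => fit; rewrite mxE (bigD1 (s j)) //= big1 ?addr0 => [|k ksj].
  case: eqVneq => [-> | isj]; first by rewrite mul1r.
  by rewrite mul0r; apply: contraNeq isj => /fit ->.
by apply: contraNeq ksj => /fit ->.
Qed.

Lemma is_decompP (s : 'S_n) (d : 'rV[F]_n) : is_decomp L s d <-> fits s /\ d = colsum.
Proof.
rewrite /is_decomp; split => [defL | [fit ->]]; last first.
  by apply/matrixP => i j; rewrite (fits_entry _ _ fit) mul_mx_diag !mxE.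
have Lij i j : L i j = (i == s j)%:R * d 0 j by rewrite defL mul_mx_diag !mxE.
split.
  apply/fitsP => i j; rewrite Lij.
  by case: (eqVneq i (s j)) => [-> | _]; rewrite ?mul0r ?eqxx.
apply/rowP => j; rewrite mxE (bigD1 (s j)) //= big1 => [|k /negbTE ksj].
  by rewrite Lij eqxx mul1r addr0.
by rewrite Lij ksj mul0r.
Qed.

Lemma is_decomp_colsum (s : 'S_n) : fits s -> is_decomp L s colsum.
Proof. by move=> fit; apply/is_decompP. Qed.

Lemma decomp_permsE :
  [set s : 'S_n | `[< exists d, is_decomp L s d >]] = [set s | fits s].
Proof.
apply/setP => s; rewrite !inE; apply/asboolP/idP => [[d /is_decompP[]] // | fit].
by exists colsum; apply: is_decomp_colsum.
Qed.

Lemma fits_eq_nz (s1 s2 : 'S_n) j :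
  fits s1 -> fits s2 -> j \notin zero_sum_cols -> s1 j = s2 j.
Proof.
move=> fit1 /fitsP fit2; rewrite inE => nzj; apply/esym/fit2.
by rewrite (fits_entry _ _ fit1) eqxx mul1r.
Qed.

Lemma fits_eq_off_zero (s t : 'S_n) :
  fits s -> {in ~: zero_sum_cols, t =1 s} -> fits t.
Proof.
move=> fit eq_ts; apply/fitsP => i j; rewrite (fits_entry _ _ fit).
case: (eqVneq i (s j)) => [-> nzL | _]; last by rewrite mul0r eqxx.
by apply: eq_ts; rewrite !inE; apply: contraNneq nzL => ->; rewrite mulr0.
Qed.

Lemma fits_coset (s0 : 'S_n) : fits s0 ->
  [set s | fits s] = [set (t * s0)%g | t in perm_on zero_sum_cols].
Proof.
move=> fit0; apply/setP => s; rewrite inE; apply/idP/imsetP => [fit | [t t_on ->]].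
  exists (s * s0^-1)%g; last by rewrite -mulgA mulVg mulg1.
  apply/subsetP => j; rewrite inE permM; apply: contraR => nzj.
  by rewrite (fits_eq_nz fit fit0 nzj) permK.
apply: (fits_eq_off_zero fit0) => j; rewrite inE => nzj.
by rewrite permM (out_perm t_on nzj).
Qed.

Lemma card_fits (s0 : 'S_n) : fits s0 -> #|[set s | fits s]| = #|zero_sum_cols|`!.
Proof.
by move=> fit0; rewrite (fits_coset fit0) card_imset ?card_perm //; exact: mulIg.
Qed.

Lemma zero_colsE (s : 'S_n) : fits s -> zero_cols L = zero_sum_cols.
Proof.
move=> fit; apply/setP => j; rewrite !inE.
apply/forallP/idP => [/(_ (s j)) | /eqP zj i]; rewrite (fits_entry _ _ fit).
  by rewrite eqxx mul1r.
by rewrite zj mulr0.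
Qed.

Lemma zero_rowsE (s : 'S_n) : fits s -> zero_rows L = (s^-1)%g @^-1: zero_sum_cols.
Proof.
move=> fit; apply/setP => i; rewrite !inE.
apply/forallP/idP => [/(_ ((s^-1)%g i)) | /eqP zi j]; rewrite (fits_entry _ _ fit).
  by rewrite permKV eqxx mul1r.
have [isj | _] := eqVneq i (s j); last by rewrite mul0r.
by rewrite isj permK in zi; rewrite zi mulr0.
Qed.

End PermutedDiagonal.

Lemma rank_diag_mx (F : fieldType) m (d : 'rV[F]_m) :
  \rank (diag_mx d) = #|[set j | d 0 j != 0]|.
Proof.
elim: m d => [|m IHm] d.
  by rewrite flatmx0 mxrank0; apply/esym/eqP; rewrite cards_eq0; apply/eqP/setP => -[].
move: d; rewrite -[m.+1]/(1 + m)%N => d.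
rewrite -[d]hsubmxK diag_mx_row rank_diag_block_mx IHm rank_rV.
rewrite -!sum1_card big_split_ord /= big_ord1_cond.
congr (_ + _)%N; last by apply: eq_bigl => j; rewrite !inE row_mxEr.
have diag1_eq0 (l : 'rV[F]_1) : (diag_mx l == 0) = (l 0 0 == 0).
  apply/eqP/eqP => [/matrixP/(_ 0 0) | l0]; first by rewrite !mxE eqxx mulr1n.
  by apply/matrixP => i j; rewrite !ord1 !mxE l0 mul0rn.
by rewrite inE row_mxEl diag1_eq0; case: (_ == 0).
Qed.

Lemma corank_fits (F : fieldType) n (L : 'M[F]_n) (s : 'S_n) :
  fits L s -> (n - \rank L)%N = #|zero_sum_cols L|.
Proof.
move=> fit; have {1}-> := is_decomp_colsum fit.
have -> : perm_matrix F s = perm_mx (s^-1)%g.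
  by apply/matrixP => i j; rewrite !mxE (canF_eq (permKV s)).
rewrite eqmxMfull ?row_full_unit ?unitmx_perm // rank_diag_mx.
have := cardsC (zero_sum_cols L); rewrite card_ord => cardZ.
rewrite -{1}cardZ -[X in (_ - X)%N](@eq_card _ (~: zero_sum_cols L)) ?addnK // => j.
by rewrite !inE mxE.
Qed.

Section ExistsFit.
Variables (F : nzRingType) (n : nat) (L : 'M[F]_n).
Hypothesis L_sparse : at_most_one_nz_per_row_col L.

Definition misfit (s : 'S_n) : {set 'I_n} :=
  [set j | [exists i, L i j != 0] && (L (s j) j == 0)].

Lemma misfit0_fits (s : 'S_n) : misfit s = set0 -> fits L s.
Proof.
move=> s_fit; apply/fitsP => i j nzL; have [_ col_uniq] := L_sparse.
have nz_col : [exists i, L i j != 0] by apply/existsP; exists i.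
have : j \notin misfit s by rewrite s_fit inE.
by rewrite inE nz_col /= => /col_uniq; apply.
Qed.

Lemma misfit_tperm (s : 'S_n) j : j \in misfit s ->
  exists t : 'S_n, (#|misfit t| < #|misfit s|)%N.
Proof.
move=> js; have [row_uniq _] := L_sparse.
move: (js); rewrite inE => /andP[/existsP[i nzL] zL].
pose k := (s^-1)%g i; have sk : s k = i by rewrite permKV.
have kj : k != j by apply: contraTneq zL => kj; rewrite -{1}kj sk.
have zLik : L i k == 0 by apply: contraTT kj => /row_uniq/(_ nzL) ->; rewrite eqxx.
exists (tperm j k * s)%g.
have sub : misfit (tperm j k * s) \subset misfit s :\ j.
  apply/subsetP => x; rewrite !inE permM.
  case: tpermP => [-> | -> | /eqP xj _].
  - by rewrite sk (negbTE nzL) andbF.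
  - by rewrite kj sk zLik => /andP[-> _].
  - by rewrite xj.
apply: leq_ltn_trans (subset_leq_card sub) _.
by rewrite (cardsD1 j (misfit s)) js.
Qed.

Lemma exists_fits : exists s, fits L s.
Proof.
have [m] := ubnP #|misfit 1|; elim: m 1%g => // m IHm s lt_sm.
have [/misfit0_fits | [j js]] := set_0Vmem (misfit s); first by exists s.
have [t lt_ts] := misfit_tperm js; exact: IHm t (leq_trans lt_ts lt_sm).
Qed.

End ExistsFit.

Section CycleRule.
Variables (F : nzRingType) (n : nat) (L : 'M[F]_n).

Lemma cycle_rule_nz (s : 'S_n) j y : cycle_rule s (colsum L) ->
  j \in zero_sum_cols L -> y \in porbit s j -> y != j -> y \notin zero_sum_cols L.
Proof.
move=> rule; rewrite !inE => jZ yj yNj; apply/negP => yZ.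
have := rule j; apply/negP; rewrite -ltnNge.
by apply/card_gt1P; exists j, y; rewrite !inE porbit_id yj jZ yZ eq_sym.
Qed.

Lemma fits_cycle_rule_eq (s1 s2 : 'S_n) : fits L s1 -> fits L s2 ->
  cycle_rule s1 (colsum L) -> cycle_rule s2 (colsum L) -> s1 = s2.
Proof.
move=> fit1 fit2 rule1 rule2; apply/permP => j.
have [jZ | jNZ] := boolP (j \in zero_sum_cols L); last exact: fits_eq_nz fit1 fit2 jNZ.
apply: eq_perm_punctured_porbits => y yj yNj; apply: fits_eq_nz fit1 fit2 _.
  exact: cycle_rule_nz rule1 jZ yj yNj.
exact: cycle_rule_nz rule2 jZ yj yNj.
Qed.

Lemma fits_split_cycle (s : 'S_n) x : fits L s ->
  (1 < #|[set j in porbit s x | colsum L 0%R j == 0%R]|)%N ->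
  exists t, fits L t /\ (#|porbits s| < #|porbits t|)%N.
Proof.
move=> fit /card_gt1P[j1 [j2 []]]; rewrite !inE => /andP[j1x j1Z] /andP[j2x j2Z] j12.
exists (tperm j1 j2 * s)%g; split.
  apply: (fits_eq_off_zero fit) => y; rewrite !inE => yNZ.
  by rewrite permM tpermD //; apply: contraNneq yNZ => <-.
have j1_j2 : j1 \in porbit s j2.
  by have /eqP -> : porbit s j2 == porbit s x by rewrite eq_porbit_mem.
have := porbits_mul_tperm s j1 j2; rewrite /= j1_j2 j12 addn0 addn1 => <-; exact: ltnSn.
Qed.

Lemma exists_fits_cycle_rule (s : 'S_n) : fits L s ->
  exists t, fits L t /\ cycle_rule t (colsum L).
Proof.
have [m] := ubnP (n - #|porbits s|); elim: m s => // m IHm s lt_sm fit.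
have [/forallP rule | ] :=
  boolP [forall x, #|[set j in porbit s x | colsum L 0%R j == 0%R]| <= 1]%N.
  by exists s.
rewrite negb_forall => /existsP[x]; rewrite -ltnNge.
case/(fits_split_cycle fit) => t [fit_t lt_st].
apply: IHm fit_t.
have : (#|porbits t| <= n)%N by rewrite (leq_trans (leq_imset_card _ _)) ?card_ord.
lia.
Qed.

End CycleRule.

Lemma fact_leq1 m : (m`! <= 1)%N = (m <= 1)%N.
Proof. by case: m => [|[|m]] //; rewrite !factS; have := fact_gt0 m; nia. Qed.

Local Open Scope complex_scope.

Theorem mainTheorem1 (R : realType) (n : nat) (L : 'M[R[i]]_n) :
  at_most_one_nz_per_row_col L ->
  let nz := (n - \rank L)%N in
  (* nz is the number of zero columns, and also of zero rows *)
  (nz = #|zero_cols L| /\ nz = #|zero_rows L|) /\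
  [/\ (* D is uniquely determined by L *)
      (forall s1 s2 d1 d2, is_decomp L s1 d1 -> is_decomp L s2 d2 -> d1 = d2),
      (* the decomposition L = AD is unique iff nz <= 1 *)
      ((forall s1 s2 d1 d2, is_decomp L s1 d1 -> is_decomp L s2 d2 ->
         s1 = s2 /\ d1 = d2) <-> (nz <= 1)%N),
      (* there are nz! ways to choose A *)
      #|[set s : 'S_n | `[< exists d, is_decomp L s d >]]| = nz`!,
      (* under the cycle rule, A is unique *)
      (forall s1 s2 d1 d2, is_decomp L s1 d1 -> cycle_rule s1 d1 ->
         is_decomp L s2 d2 -> cycle_rule s2 d2 -> s1 = s2)
    & (* and A can always be chosen so that the rule holds *)
      exists s d, is_decomp L s d /\ cycle_rule s d].
Proof.
move=> L_sparse nz; have [s0 fit0] := exists_fits L_sparse.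
have nzE : nz = #|zero_sum_cols L| := corank_fits fit0.
have card_decomps : #|[set s : 'S_n | `[< exists d, is_decomp L s d >]]| = nz`!.
  by rewrite decomp_permsE (card_fits fit0) nzE.
split.
  by rewrite (zero_colsE fit0) (zero_rowsE fit0) card_preimset ?nzE //; exact: perm_inj.
split => //.
- by move=> s1 s2 d1 d2 /is_decompP[_ ->] /is_decompP[_ ->].
- rewrite -fact_leq1 -card_decomps decomp_permsE; split => [uniq_decomp | le1].
    by apply/card_le1_eqP => s1 s2; rewrite !inE => fit1 fit2;
      case: (uniq_decomp s1 s2 _ _ (is_decomp_colsum fit1) (is_decomp_colsum fit2)).
  move=> s1 s2 d1 d2 /is_decompP[fit1 ->] /is_decompP[fit2 ->]; split => //.
  by apply: (card_le1_eqP le1); rewrite inE.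
- move=> s1 s2 d1 d2 /is_decompP[fit1 ->] rule1 /is_decompP[fit2 ->] rule2.
  exact: fits_cycle_rule_eq fit1 fit2 rule1 rule2.
- have [s [fit rule]] := exists_fits_cycle_rule fit0.
  by exists s, (colsum L); split => //; apply: is_decomp_colsum.
Qed.
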